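(* Let $\mathbf{A}_b\in\{0,1\}^{|\mathcal{U}|\times|\mathcal{I}|}$ be the bi-adjacency matrix of a user-item bipartite graph for behavior $b$, and let $\tilde{\mathbf{A}}_b$ be its symmetrically normalized version. Let $\alpha,\beta\ge 0$ with $\gamma = 1-\alpha-\beta\in(0,1)$. Fix vectors $\mathbf{q}_{\mathcal{U}_b},\mathbf{r}_{\mathcal{U}_{b'}}\in\mathbb{R}^{|\mathcal{U}|}$ and $\mathbf{q}_{\mathcal{I}_b},\mathbf{r}_{\mathcal{I}_{b'}}\in\mathbb{R}^{|\mathcal{I}|}$, and starting vectors $\mathbf{r}^{(0)}_{\mathcal{U}_b}$ and $\mathbf{r}^{(0)}_{\mathcal{I}_b}$ (in the algorithm these are $\mathbf{q}_{\mathcal{U}_b}$ and $\mathbf{q}_{\mathcal{I}_b}$). Consider the power iteration, for $k\ge 1$, $$\mathbf{r}^{(k)}_{\mathcal{U}_b} = \gamma\,\tilde{\mathbf{A}}_b\,\mathbf{r}^{(k-1)}_{\mathcal{I}_b} + \alpha\,\mathbf{q}_{\mathcal{U}_b} + \beta\,\mathbf{r}_{\mathcal{U}_{b'}},$$ $$\mathbf{r}^{(k)}_{\mathcal{I}_b} = \gamma\,\tilde{\mathbf{A}}_b^{\top}\,\mathbf{r}^{(k-1)}_{\mathcal{U}_b} + \alpha\,\mathbf{q}_{\mathcal{I}_b} + \beta\,\mathbf{r}_{\mathcal{I}_{b'}}.$$ Then the sequences $\mathbf{r}^{(k)}_{\mathcal{U}_b}$ and $\mathbf{r}^{(k)}_{\mathcal{I}_b}$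 converge as $k\to\infty$.
   Context: Degrees: $d_b(u)=\sum_i\mathbf{A}_b(u,i)$ and $d_b(i)=\sum_u\mathbf{A}_b(u,i)$. The symmetrically normalized bi-adjacency matrix $\tilde{\mathbf{A}}_b$ has entries $\tilde{\mathbf{A}}_b(u,i)=\mathbf{A}_b(u,i)/(\sqrt{d_b(u)}\sqrt{d_b(i)})$ when $\mathbf{A}_b(u,i)=1$, and $0$ otherwise; equivalently $\tilde{\mathbf{A}}_b=\mathbf{D}_{\mathcal{U}_b}^{-1/2}\mathbf{A}_b\mathbf{D}_{\mathcal{I}_b}^{-1/2}$. Here $\mathbf{r}_{\mathcal{U}_{b'}}$ and $\mathbf{r}_{\mathcal{I}_{b'}}$ are the fixed ranking vectors of the preceding behavior $b'$ in the cascading sequence. The iteration is the inner loop of the CascadingRank algorithm when it is run without the early-stopping criterion. *)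

From HB Require Import structures.
From mathcomp Require Import all_boot all_order all_algebra.
From mathcomp Require Import all_classical all_reals all_analysis.
Set Implicit Arguments. Unset Strict Implicit. Unset Printing Implicit Defensive.
Import Order.TTheory GRing.Theory Num.Theory.
Local Open Scope ring_scope.

Definition deg_user (R : realType) (m n : nat) (A : 'M[R]_(m, n)) (u : 'I_m) : R :=
  \sum_(i < n) A u i.
Definition deg_item (R : realType) (m n : nat) (A : 'M[R]_(m, n)) (i : 'I_n) : R :=
  \sum_(u < m) A u i.

Definition norm_biadj (R : realType) (m n : nat) (A : 'M[R]_(m, n)) : 'M[R]_(m, n) :=
  \matrix_(u < m, i < n)
    (if A u i == 1 then A u i / (Num.sqrt (deg_user A u) * Num.sqrt (deg_item A i))
     else 0).

Fixpoint cascade_iter (R : realType) (m n : nat) (A : 'M[R]_(m, n))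
  (alpha beta : R) (qU rU' rU0 : 'cV[R]_m) (qI rI' rI0 : 'cV[R]_n) (k : nat)
  : 'cV[R]_m * 'cV[R]_n :=
  match k with
  | 0 => (rU0, rI0)
  | k'.+1 =>
    let p := cascade_iter A alpha beta qU rU' rU0 qI rI' rI0 k' in
    let gamma := 1 - alpha - beta in
    (gamma *: (norm_biadj A *m p.2) + alpha *: qU + beta *: rU',
     gamma *: ((norm_biadj A)^T *m p.1) + alpha *: qI + beta *: rI')
  end.

From HB Require Import structures.
From mathcomp Require Import all_boot all_order all_algebra.
From mathcomp Require Import all_classical all_reals all_analysis.
From mathcomp Require Import ring lra.
Set Implicit Arguments. Unset Strict Implicit. Unset Printing Implicit Defensive.
Import Order.TTheory GRing.Theory Num.Theory.
Import numFieldNormedType.Exports.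
Local Open Scope ring_scope.

(* For a 0/1 matrix A, the normalised bi-adjacency matrix is a contraction for
   the Euclidean norm: by Cauchy-Schwarz, the square of the u-th coordinate of
   its image of y is at most sum_i A(u,i) y_i^2 / d(i), and summing over u
   gives |y|^2.  The increments dU_k, dI_k of the iteration are mapped to each
   other by this matrix and its transpose, scaled by gamma, so the energy
   |dU_k|^2 + |dI_k|^2 shrinks by gamma^2 at each step: the increments decay
   geometrically and the iterates form a Cauchy sequence. *)

(* Matrices over a realType are declared complete and normed separately;
   restating completeness lets HB build the complete normed module structure. *)
HB.instance Definition _ (R : realType) m n := Complete.on 'M[R]_(m, n).

Lemma cvg_geometric_increments {R : realType} (V : completeNormedModType R)
    (u : V ^nat) (c g : R) :
  0 <= g < 1 -> (forall k, `|u k.+1 - u k| <= c * g ^+ k) -> cvgn u.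
Proof.
move=> /andP[g_ge0 g_lt1] le_incr.
have -> : u = fun k => u 0%N + series (fun k => u k.+1 - u k) k.
  by apply: funext => k; rewrite eq_sum_telescope.
apply: is_cvgD; first exact: is_cvg_cst.
apply: normed_cvg; apply: (series_le_cvg _ _ le_incr) => // [k|].
  exact: le_trans (le_incr k).
by apply: is_cvg_geometric_series; rewrite ger0_norm.
Qed.

Lemma sqr_sum_mul_le (R : realDomainType) (I : finType) (f g : I -> R) :
  (\sum_i f i * g i) ^+ 2 <= (\sum_i f i ^+ 2) * (\sum_i g i ^+ 2).
Proof.
set F := \sum_i f i ^+ 2; set G := \sum_i g i ^+ 2; set S := \sum_i f i * g i.
have lagrange : \sum_i \sum_j (f i * g j - f j * g i) ^+ 2 = 2 * (F * G) - 2 * S ^+ 2.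
  transitivity (\sum_i \sum_j (f i ^+ 2 * g j ^+ 2 + f j ^+ 2 * g i ^+ 2
                               - 2 * ((f i * g i) * (f j * g j)))).
    by apply: eq_bigr => i _; apply: eq_bigr => j _; ring.
  under eq_bigr do rewrite !big_split /=.
  rewrite !big_split /=.
  have -> : \sum_i \sum_j f i ^+ 2 * g j ^+ 2 = F * G.
    by rewrite mulr_suml; apply: eq_bigr => i _; rewrite mulr_sumr.
  have -> : \sum_i \sum_j f j ^+ 2 * g i ^+ 2 = F * G.
    rewrite mulrC mulr_suml; apply: eq_bigr => i _; rewrite mulr_sumr.
    by apply: eq_bigr => j _; rewrite mulrC.
  have -> : \sum_i \sum_j - (2 * ((f i * g i) * (f j * g j))) = - (2 * S ^+ 2).
    rewrite expr2 mulr_suml mulr_sumr -sumrN; apply: eq_bigr => i _.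
    by rewrite mulr_sumr mulr_sumr -sumrN; apply: eq_bigr => j _; ring.
  ring.
have : 0 <= \sum_i \sum_j (f i * g j - f j * g i) ^+ 2.
  by apply: sumr_ge0 => i _; apply: sumr_ge0 => j _; apply: sqr_ge0.
rewrite lagrange; lra.
Qed.

Lemma subrD2r (V : zmodType) (x y z : V) : (x + z) - (y + z) = x - y.
Proof. by rewrite [y + z]addrC addrKA. Qed.

Lemma mulfV_le1 (F : numFieldType) (x : F) : x / x <= 1.
Proof. by have [->|x_neq0] := eqVneq x 0; rewrite ?mul0r ?divff. Qed.

Definition sqnorm (R : pzRingType) k (x : 'cV[R]_k) : R := \sum_i x i 0 ^+ 2.

Lemma sqnorm_ge0 (R : realDomainType) k (x : 'cV[R]_k) : 0 <= sqnorm x.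
Proof. by apply: sumr_ge0 => i _; apply: sqr_ge0. Qed.

Lemma sqnormZ (R : comPzRingType) k (c : R) (x : 'cV[R]_k) :
  sqnorm (c *: x) = c ^+ 2 * sqnorm x.
Proof. by rewrite /sqnorm mulr_sumr; apply: eq_bigr => i _; rewrite mxE exprMn. Qed.

Lemma sqr_mx_norm_le_sqnorm (R : realType) k (x : 'cV[R]_k) : `|x| ^+ 2 <= sqnorm x.
Proof.
rewrite /Num.norm /= mx_normrE.
elim/big_ind: _ => [|a b|[i j] _]; first by rewrite expr0n /=; apply: sqnorm_ge0.
  by move=> a2_le b2_le; rewrite maxEle; case: ifP.
rewrite (ord1 j) /= real_normK ?num_real // /sqnorm (bigD1 i) //= lerDl.
by apply: sumr_ge0 => l _; apply: sqr_ge0.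
Qed.

Section NormBiadjContraction.
Variables (R : realType) (m n : nat) (A : 'M[R]_(m, n)).
Hypothesis A01 : forall u i, A u i = 0 \/ A u i = 1.

Lemma biadj_sqr u i : A u i ^+ 2 = A u i.
Proof. by case: (A01 u i) => ->; rewrite ?expr0n ?expr1n. Qed.

Lemma biadj_ge0 u i : 0 <= A u i.
Proof. by case: (A01 u i) => ->. Qed.

Lemma deg_item_ge0 i : 0 <= deg_item A i.
Proof. by apply: sumr_ge0 => u _; apply: biadj_ge0. Qed.

Lemma norm_biadjE u i :
  norm_biadj A u i = A u i / (Num.sqrt (deg_user A u) * Num.sqrt (deg_item A i)).
Proof. by rewrite mxE; case: (A01 u i) => ->; rewrite ?eqxx // mul0r; case: eqP. Qed.

Lemma sqr_norm_biadj_row_le (y : 'cV[R]_n) u :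
  (norm_biadj A *m y) u 0 ^+ 2 <= \sum_i A u i * y i 0 ^+ 2 / deg_item A i.
Proof.
pose f i := A u i / Num.sqrt (deg_user A u).
pose g i := A u i * y i 0 / Num.sqrt (deg_item A i).
have -> : (norm_biadj A *m y) u 0 = \sum_i f i * g i.
  rewrite mxE; apply: eq_bigr => i _.
  by rewrite norm_biadjE /f /g invfM -{1}biadj_sqr; ring.
have sum_f2 : \sum_i f i ^+ 2 <= 1.
  have -> : \sum_i f i ^+ 2 = deg_user A u / deg_user A u.
    rewrite /deg_user mulr_suml; apply: eq_bigr => i _.
    rewrite /f exprMn exprVn biadj_sqr sqr_sqrtr //.
    by apply: sumr_ge0 => j _; apply: biadj_ge0.
  exact: mulfV_le1.
have -> : \sum_i A u i * y i 0 ^+ 2 / deg_item A i = \sum_i g i ^+ 2.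
  by apply: eq_bigr => i _; rewrite /g !exprMn exprVn biadj_sqr sqr_sqrtr ?deg_item_ge0.
apply: le_trans (sqr_sum_mul_le f g) _.
by apply: ler_piMl sum_f2; apply: sumr_ge0 => i _; apply: sqr_ge0.
Qed.

Lemma sqnorm_norm_biadj_le (y : 'cV[R]_n) : sqnorm (norm_biadj A *m y) <= sqnorm y.
Proof.
apply: le_trans (ler_sum _ (fun u _ => sqr_norm_biadj_row_le y u)) _.
rewrite exchange_big /=; apply: ler_sum => i _.
rewrite -mulr_suml -[X in X / _]mulr_suml -/(deg_item A i) -mulrA.
by rewrite mulrCA; apply: ler_piMr; [apply: sqr_ge0 | apply: mulfV_le1].
Qed.

End NormBiadjContraction.

Lemma deg_user_trmx (R : realType) m n (A : 'M[R]_(m, n)) i :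
  deg_user A^T i = deg_item A i.
Proof. by apply: eq_bigr => u _; rewrite mxE. Qed.

Lemma deg_item_trmx (R : realType) m n (A : 'M[R]_(m, n)) u :
  deg_item A^T u = deg_user A u.
Proof. by apply: eq_bigr => i _; rewrite mxE. Qed.

Lemma trmx_norm_biadj (R : realType) m n (A : 'M[R]_(m, n)) :
  (norm_biadj A)^T = norm_biadj A^T.
Proof.
by apply/matrixP => i u; rewrite !mxE deg_user_trmx deg_item_trmx [X in _ / X]mulrC.
Qed.

Section CascadeIteration.
Variables (R : realType) (m n : nat) (A : 'M[R]_(m, n)) (alpha beta : R).
Variables (qU rU' rU0 : 'cV[R]_m) (qI rI' rI0 : 'cV[R]_n).

Local Notation r k := (cascade_iter A alpha beta qU rU' rU0 qI rI' rI0 k).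
Local Notation gamma := (1 - alpha - beta).

Let incrU k := (r k.+1).1 - (r k).1.
Let incrI k := (r k.+1).2 - (r k).2.
Let energy k := sqnorm (incrU k) + sqnorm (incrI k).

Lemma cascade_incrUS k : incrU k.+1 = gamma *: (norm_biadj A *m incrI k).
Proof. by rewrite /incrU /= !subrD2r mulmxBr scalerBr. Qed.

Lemma cascade_incrIS k : incrI k.+1 = gamma *: ((norm_biadj A)^T *m incrU k).
Proof. by rewrite /incrI /= !subrD2r mulmxBr scalerBr. Qed.

Hypothesis A01 : forall u i, A u i = 0 \/ A u i = 1.

Lemma cascade_energyS k : energy k.+1 <= gamma ^+ 2 * energy k.
Proof.
have AT01 i u : A^T i u = 0 \/ A^T i u = 1 by rewrite mxE.
rewrite /energy cascade_incrUS cascade_incrIS !sqnormZ -mulrDr [sqnorm (incrU k) + _]addrC.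
rewrite ler_wpM2l ?sqr_ge0 // trmx_norm_biadj.
by apply: lerD; [apply: sqnorm_norm_biadj_le A01 _ | apply: sqnorm_norm_biadj_le AT01 _].
Qed.

Lemma cascade_energy_le k : energy k <= (gamma ^+ k) ^+ 2 * energy 0.
Proof.
elim: k => [|k IHk]; first by rewrite expr0 expr1n mul1r.
apply: le_trans (cascade_energyS k) _.
have -> : (gamma ^+ k.+1) ^+ 2 * energy 0 = gamma ^+ 2 * ((gamma ^+ k) ^+ 2 * energy 0).
  by rewrite [gamma ^+ k.+1]exprS exprMn mulrA.
by apply: ler_wpM2l; first exact: sqr_ge0.
Qed.

Hypothesis gamma_ge0 : 0 <= gamma.

Lemma cascade_incr_le k :
  `|incrU k| <= Num.sqrt (energy 0) * gamma ^+ k /\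
  `|incrI k| <= Num.sqrt (energy 0) * gamma ^+ k.
Proof.
have energy0_ge0 : 0 <= energy 0 by apply: addr_ge0; apply: sqnorm_ge0.
have bound_ge0 : 0 <= Num.sqrt (energy 0) * gamma ^+ k.
  by rewrite mulr_ge0 ?sqrtr_ge0 ?exprn_ge0.
have sqr_bound : energy k <= (Num.sqrt (energy 0) * gamma ^+ k) ^+ 2.
  by rewrite exprMn sqr_sqrtr // mulrC cascade_energy_le.
have le_bound x : sqnorm x <= energy k -> `|x| <= Num.sqrt (energy 0) * gamma ^+ k.
  move=> x_le; rewrite -ler_sqr ?nnegrE //.
  exact: le_trans (sqr_mx_norm_le_sqnorm x) (le_trans x_le sqr_bound).
by split; apply: le_bound; rewrite ?lerDl ?lerDr sqnorm_ge0.
Qed.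

End CascadeIteration.

Theorem theorem2 (R : realType) (m n : nat) (A : 'M[R]_(m, n))
  (HA : forall u i, A u i = 0 \/ A u i = 1)
  (alpha beta : R) (Ha : 0 <= alpha) (Hb : 0 <= beta)
  (Hg0 : 0 < 1 - alpha - beta) (Hg1 : 1 - alpha - beta < 1)
  (qU rU' rU0 : 'cV[R]_m) (qI rI' rI0 : 'cV[R]_n) :
  cvgn (fun k => (cascade_iter A alpha beta qU rU' rU0 qI rI' rI0 k).1) /\
  cvgn (fun k => (cascade_iter A alpha beta qU rU' rU0 qI rI' rI0 k).2).
Proof.
have gamma_ge0 := ltW Hg0.
have gamma_bnd : 0 <= 1 - alpha - beta < 1 by rewrite gamma_ge0 Hg1.
have incr_le k := cascade_incr_le qU rU' rU0 qI rI' rI0 HA gamma_ge0 k.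
split; apply: (cvg_geometric_increments gamma_bnd) => k.
- exact: proj1 (incr_le k).
- exact: proj2 (incr_le k).
Qed.
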